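(* Let $d\geqslant2$ and let $\mathcal{D}\subseteq\mathbb{Z}^d$ be the set of all vectors $(\epsilon_1n,\dots,\epsilon_dn)$ with $n\in\mathbb{Z}$ and $\epsilon_1,\dots,\epsilon_d\in\{1,-1\}$. Then $\mathcal{D}$ is not eventually periodic (with respect to any choice of periods $u_1,\dots,u_d$). Moreover, for each $1\leqslant i\leqslant d$, the set $\mathcal{H}_i=\{(x_1,\dots,x_d)\in\mathbb{Z}^d:x_i=0\}$ is a minimal complement of $\mathcal{D}$ in $\mathbb{Z}^d$.
   Context: $\mathbb{N}=\{0,1,2,\dots\}$. Given $u_1,\dots,u_d\in\mathbb{Z}^d$ satisfying no nontrivial $\mathbb{Z}$-linear relation and $P=\mathbb{N}u_1+\dots+\mathbb{N}u_d$, a nonempty $X\subseteq\mathbb{Z}^d$ is eventually periodic with periods $u_1,\dots,u_d$ if $X\subseteq F+P$ for some nonempty finite $F\subseteq\mathbb{Z}^d$ and $x+P\subseteq X$ for all but finitely many $x\in X$. A nonempty $M\subseteq\mathbb{Z}^d$ is a complement of $W$ if $M+W=\mathbb{Z}^d$, and a minimal complement if no proper subset of $M$ is a complement of $W$. *)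

From mathcomp Require Import all_boot all_order all_algebra.
Set Implicit Arguments. Unset Strict Implicit. Unset Printing Implicit Defensive.
Import Order.TTheory GRing.Theory Num.Theory.
Local Open Scope ring_scope.

Definition Zvec (d : nat) := 'rV[int]_d.
Definition Zset (d : nat) := Zvec d -> Prop.

Definition no_Z_relation (d : nat) (u : 'I_d -> Zvec d) : Prop :=
  forall c : 'I_d -> int, \sum_(i < d) u i *~ c i = 0 -> forall i, c i = 0.

Definition cone (d : nat) (u : 'I_d -> Zvec d) : Zset d :=
  fun x => exists k : 'I_d -> nat, x = \sum_(i < d) u i *+ k i.

Definition eventually_periodic (d : nat) (u : 'I_d -> Zvec d) (X : Zset d) : Prop :=
  (exists x, X x) /\
  (exists F : seq (Zvec d), F != [::] /\
     forall x, X x -> exists2 f, f \in F & exists2 p, cone u p & x = f + p) /\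
  (exists E : seq (Zvec d),
     forall x, X x -> x \notin E -> forall p, cone u p -> X (x + p)).

Definition is_complement (d : nat) (M W : Zset d) : Prop :=
  (exists x, M x) /\
  forall z : Zvec d, exists m w, [/\ M m, W w & z = m + w].

Definition minimal_complement (d : nat) (M W : Zset d) : Prop :=
  is_complement M W /\
  forall M' : Zset d, (forall x, M' x -> M x) -> is_complement M' W ->
    forall x, M x -> M' x.

Definition Dset (d : nat) : Zset d :=
  fun x => exists (n : int) (eps : 'I_d -> int),
    (forall i, eps i = 1 \/ eps i = -1) /\ forall i, x 0 i = eps i * n.

Definition Hset (d : nat) (i : 'I_d) : Zset d := fun x => x 0 i = 0.

From mathcomp Require Import all_boot all_order all_algebra ring.
Import Order.TTheory GRing.Theory Num.Theory.
Set Implicit Arguments. Unset Strict Implicit. Unset Printing Implicit Defensive.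
Local Open Scope ring_scope.

(* Every point of D has all coordinates of equal square. If x + P were
   contained in D, then along each ray x + k v (v in P) the coordinates
   x_j + k v_j have equal squares for all k, so v itself has equal squares;
   applying this to v = u_1, u_2, u_1 + u_2 forces u_1 and u_2 to be
   proportional, contradicting the absence of a Z-linear relation.
   For minimality, a point of D with a vanishing coordinate is 0, so a point
   of H_i can only be written as itself plus the zero element of D. *)

Lemma sqr_eq_step (R : numDomainType) (a b c e : R) :
  a ^+ 2 = c ^+ 2 -> (a + b) ^+ 2 = (c + e) ^+ 2 ->
  (a + b *+ 2) ^+ 2 = (c + e *+ 2) ^+ 2 -> b ^+ 2 = e ^+ 2.
Proof.
move=> h0 h1 h2.
suff : (b ^+ 2 - e ^+ 2) *+ 2 = 0 by move/eqP; rewrite mulrn_eq0 subr_eq0 => /eqP.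
(* second finite difference of k |-> (a + k b)^2 - (c + k e)^2 *)
have -> : (b ^+ 2 - e ^+ 2) *+ 2 = ((a + b *+ 2) ^+ 2 - (c + e *+ 2) ^+ 2)
    - ((a + b) ^+ 2 - (c + e) ^+ 2) *+ 2 + (a ^+ 2 - c ^+ 2) by ring.
by rewrite h0 h1 h2; ring.
Qed.

Lemma sqr_eq_cross (R : numDomainType) (a b c e : R) :
  a ^+ 2 = c ^+ 2 -> b ^+ 2 = e ^+ 2 -> (a + b) ^+ 2 = (c + e) ^+ 2 ->
  a * e = b * c.
Proof.
move=> h0 h1 h2.
have hab : a * b = c * e.
  suff : (a * b - c * e) *+ 2 = 0 by move/eqP; rewrite mulrn_eq0 subr_eq0 => /eqP.
  have -> : (a * b - c * e) *+ 2 =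
      ((a + b) ^+ 2 - (c + e) ^+ 2) - (a ^+ 2 - c ^+ 2) - (b ^+ 2 - e ^+ 2) by ring.
  by rewrite h0 h1 h2; ring.
suff : (a * e - b * c) ^+ 2 = 0 by move/eqP; rewrite sqrf_eq0 subr_eq0 => /eqP.
have -> : (a * e - b * c) ^+ 2 = (a ^+ 2 - c ^+ 2) * e ^+ 2
    + c ^+ 2 * (b ^+ 2 - e ^+ 2) - (a * b - c * e) * (c * e) *+ 2 by ring.
by rewrite h0 h1 hab; ring.
Qed.

Section Vectors.
Variable d : nat.
Implicit Types (x v w : Zvec d) (E : seq (Zvec d)).

Definition sqr_balanced x := forall j j', x 0 j ^+ 2 = x 0 j' ^+ 2.

Lemma Dset_sqr_balanced x : Dset x -> sqr_balanced x.
Proof.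
move=> [n [eps [heps hx]]] j j'; rewrite !hx !exprMn.
by case: (heps j) => ->; case: (heps j') => ->; rewrite ?sqrrN.
Qed.

Lemma Dset_const (n : int) : @Dset d (const_mx n).
Proof. by exists n, (fun=> 1); split=> j; [left | rewrite mxE mul1r]. Qed.

Lemma sqr_balanced_eq0 x j : sqr_balanced x -> x 0 j = 0 -> x = 0.
Proof.
move=> hx xj0; apply/matrixP => a j'; rewrite (ord1 a) mxE.
by apply/eqP; rewrite -sqrf_eq0 (hx j' j) xj0 expr0n.
Qed.

Lemma mxE_addMn x v (k : nat) j : (x + v *+ k) 0 j = x 0 j + v 0 j *+ k.
Proof. by rewrite -scaler_nat !mxE mulr_natl. Qed.

Lemma sqr_balanced_ray x v :
  (forall k : nat, sqr_balanced (x + v *+ k)) -> sqr_balanced v.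
Proof.
move=> hray j j'.
have hk k : (x 0 j + v 0 j *+ k) ^+ 2 = (x 0 j' + v 0 j' *+ k) ^+ 2.
  by rewrite -!mxE_addMn; apply: hray.
have h0 := hk 0%N; rewrite !mulr0n !addr0 in h0.
have h1 := hk 1%N; rewrite !mulr1n in h1.
exact: sqr_eq_step h0 h1 (hk 2%N).
Qed.

Lemma sqr_balanced_cross v w j0 :
  sqr_balanced v -> sqr_balanced w -> sqr_balanced (v + w) ->
  v *~ w 0 j0 = w *~ v 0 j0.
Proof.
move=> hv hw hvw; apply/matrixP => a j; rewrite (ord1 a) -!scaler_int !mxE.
rewrite !intz mulrC [RHS]mulrC; apply: sqr_eq_cross (hv j j0) (hw j j0) _.
by have := hvw j j0; rewrite !mxE.
Qed.

Lemma exists_const_notin E : (0 < d)%N -> exists n : int, const_mx n \notin E.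
Proof.
move=> d_gt0; pose j := Ordinal d_gt0.
suff [n hn] : exists n : int, forall e, e \in E -> e 0 j < n.
  by exists n; apply/negP => /hn; rewrite mxE ltxx.
elim: E => [|e E [n hn]]; first by exists 0.
exists (Num.max n (e 0 j + 1)) => f; rewrite inE => /orP [/eqP -> | /hn fn].
  by rewrite lt_max ltrDl ltr01 orbT.
by rewrite lt_max fn.
Qed.

End Vectors.

Section Cone.
Variables (d : nat) (u : 'I_d -> Zvec d).

Lemma cone0 : cone u 0.
Proof. by exists (fun=> 0%N); rewrite big1 // => i _; rewrite mulr0n. Qed.

Lemma coneD p q : cone u p -> cone u q -> cone u (p + q).
Proof.
move=> [k1 ->] [k2 ->]; exists (fun i => (k1 i + k2 i)%N).
by rewrite -big_split /=; apply: eq_bigr => i _; rewrite mulrnDr.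
Qed.

Lemma coneMn p (k : nat) : cone u p -> cone u (p *+ k).
Proof.
move=> hp; elim: k => [|k IHk]; first by rewrite mulr0n; apply: cone0.
by rewrite mulrS; apply: coneD.
Qed.

Lemma cone_gen i : cone u (u i).
Proof.
exists (fun j => (j == i : nat)).
by rewrite (bigD1 i) //= eqxx big1 ?addr0 // => j /negbTE ->.
Qed.

Lemma no_Z_relation2 i0 i1 (a b : int) : no_Z_relation u -> i1 != i0 ->
  u i0 *~ a + u i1 *~ b = 0 -> a = 0 /\ b = 0.
Proof.
move=> hrel ne10 hab.
pose c i : int := if i == i0 then a else if i == i1 then b else 0.
have hc : \sum_(i < d) u i *~ c i = 0.
  rewrite (bigD1 i0) //= (bigD1 i1) //= big1 ?addr0 /c ?eqxx ?(negbTE ne10) //.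
  by move=> i /andP [/negbTE -> /negbTE ->]; rewrite mulr0z.
by split; [have := hrel c hc i0 | have := hrel c hc i1];
  rewrite /c ?eqxx ?(negbTE ne10).
Qed.

End Cone.

Lemma Dset_not_eventually_periodic (d : nat) (u : 'I_d -> Zvec d) :
  (2 <= d)%N -> no_Z_relation u -> ~ eventually_periodic u (@Dset d).
Proof.
move=> d_ge2 hrel [_ [_ [E hE]]].
pose i0 := Ordinal (ltnW d_ge2); pose i1 := Ordinal d_ge2.
have ne10 : i1 != i0 by [].
have [n xE] := exists_const_notin E (ltnW d_ge2).
have cone_balanced v : cone u v -> sqr_balanced v.
  move=> hv; apply: (@sqr_balanced_ray _ (const_mx n)) => k.
  by apply/Dset_sqr_balanced/hE; [apply: Dset_const | | apply: coneMn].
pose A := u i0; pose B := u i1.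
have hA : sqr_balanced A := cone_balanced _ (cone_gen u i0).
have hB : sqr_balanced B := cone_balanced _ (cone_gen u i1).
have hAB : sqr_balanced (A + B) by apply/cone_balanced/coneD; apply: cone_gen.
have [_ /eqP] : B 0 i0 = 0 /\ - A 0 i0 = 0.
  apply: (no_Z_relation2 hrel ne10).
  by rewrite mulrNz (sqr_balanced_cross i0 hA hB hAB) subrr.
rewrite oppr_eq0 => /eqP A0.
have A_eq0 : A = 0 := sqr_balanced_eq0 hA A0.
have := @no_Z_relation2 _ u i0 i1 1 0 hrel ne10.
by rewrite -/A A_eq0 mul0rz add0r mulr0z => /(_ erefl) [].
Qed.

Lemma Hset_complement (d : nat) (i : 'I_d) : is_complement (Hset i) (@Dset d).
Proof.
split; first by exists 0; rewrite /Hset mxE.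
move=> z; exists (z - const_mx (z 0 i)), (const_mx (z 0 i)).
split; [by rewrite /Hset !mxE subrr | exact: Dset_const | by rewrite subrK].
Qed.

Lemma Hset_minimal_complement (d : nat) (i : 'I_d) :
  minimal_complement (Hset i) (@Dset d).
Proof.
split=> [|M sub_MH [_ hM] x]; first exact: Hset_complement.
have [m [w [hm hw ->]]] := hM x => hx.
suff -> : w = 0 by rewrite addr0.
apply: (sqr_balanced_eq0 (j := i) (Dset_sqr_balanced hw)).
by move: hx; rewrite /Hset mxE (sub_MH _ hm) add0r.
Qed.

Theorem proposition6p1 (d : nat) (hd : (2 <= d)%N) :
  (forall u : 'I_d -> Zvec d, no_Z_relation u -> ~ eventually_periodic u (@Dset d)) /\
  (forall i : 'I_d, minimal_complement (Hset i) (@Dset d)).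
Proof.
split=> [u|i]; first exact: Dset_not_eventually_periodic.
exact: Hset_minimal_complement.
Qed.
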